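(* For $A,x\in\mathbb{R}$ define $E_0(A,x):=1$, $E_1(A,x):=e^{(1-x)A}$ and, for $n\ge2$, \[ E_n(A,x):=\begin{cases} \exp\!\Big(\big[x(E_1+E_3+\cdots+E_{n-1})-\tfrac n2\big]A\Big), & n \text{ even},\\[4pt] \exp\!\Big(\big[\tfrac{n+1}{2}-x(E_0+E_2+\cdots+E_{n-1})\big]A\Big), & n\text{ odd},\end{cases} \] with all $E_j$ evaluated at $(A,x)$. Define $\varphi_1(A,x):=x-1$, $\varphi_n(A,x):=\varphi_{n-1}(A,x)-1+xE_{n-1}(A,x)$ for $n\ge2$, and the polynomial $p_n(A):=\frac{\partial\varphi_n}{\partial x}(A,1)$. Then for every $n\ge1$, the polynomials $\frac{p_{2n}(A)}{2-A}$ and $p_{2n+1}(A)$ are even functions of $A$.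
   Context: For every $n\ge1$, $2-A$ divides $p_{2n}(A)$, so $\frac{p_{2n}(A)}{2-A}$ is a polynomial. *)

From HB Require Import structures.
From mathcomp Require Import all_boot all_order all_algebra.
From mathcomp Require Import all_classical all_reals all_analysis.
Set Implicit Arguments. Unset Strict Implicit. Unset Printing Implicit Defensive.
Import Order.TTheory GRing.Theory Num.Theory.
Local Open Scope ring_scope.

Section Defs.
Variable R : realType.

(* Next value E_n(A,x), given s = [:: E_0; ...; E_{n-1}]. *)
Definition E_next (A x : R) (n : nat) (s : seq R) : R :=
  if n == 1%N then expR ((1 - x) * A)
  else if odd n then
    expR (((n.+1)%:R / 2 - x * \sum_(j < n | ~~ odd j) s`_j) * A)
  else
    expR ((x * \sum_(j < n | odd j) s`_j - n%:R / 2) * A).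

Fixpoint Elist (A x : R) (n : nat) : seq R :=
  match n with
  | 0 => [:: 1]
  | m.+1 => let s := Elist A x m in rcons s (E_next A x m.+1 s)
  end.

Definition E (n : nat) (A x : R) : R := nth 0 (Elist A x n) n.

(* phi_1 = x - 1, phi_n = phi_{n-1} - 1 + x E_{n-1} for n >= 2;
   phi_0 is unused (set to 0). *)
Fixpoint phi (n : nat) (A x : R) : R :=
  match n with
  | 0 => 0
  | m.+1 => if m is 0 then x - 1 else phi m A x - 1 + x * E m A x
  end.

Definition p (n : nat) (A : R) : R := derive1 (fun x => phi n A x) 1.

End Defs.

From HB Require Import structures.
From mathcomp Require Import all_boot all_order all_algebra.
From mathcomp Require Import all_classical all_reals all_analysis.
From mathcomp Require Import ring.
Import Order.TTheory GRing.Theory Num.Theory.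
Local Open Scope ring_scope.

(* Every E_j(A, .) equals 1 at x = 1, so differentiating the tower at x = 1
   gives e_n := dE_n/dx (A, 1) = (-1)^n A (ceil(n/2) + sum of the e_j, j < n,
   of parity opposite to n), while p_n = sum_(j < n) (1 + e_j).  Hence
   e_(n+2) = e_n + (-1)^n A (1 + e_(n+1)) and (-1)^(n+1) (e_(n+1) - e_n) = A p_(n+1),
   which combine into p_(n+4) = (2 - A^2) p_(n+2) - p_n.  The multiplier 2 - A^2
   is even in A, and p_0 = 0, p_2 = 2 - A, p_1 = 1, p_3 = 3 - A^2, so by
   induction p_(2n) is 2 - A times an even polynomial and p_(2n+1) is even. *)

Section EvenPolyMultiple.
Context {R : comNzRingType}.

Definition even_poly_multiple (g f : R -> R) : Prop :=
  exists q : {poly R}, (forall A, f A = g A * q.[A]) /\ (forall A, q.[- A] = q.[A]).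

Lemma even_poly_multiple_rec (g : R -> R) (u : nat -> R -> R) k :
    (forall k A, u k.+2 A = (2 - A ^+ 2) * u k.+1 A - u k A) ->
    even_poly_multiple g (u 0%N) -> even_poly_multiple g (u 1%N) ->
  even_poly_multiple g (u k).
Proof.
move=> u_rec u0 u1.
suff [] : even_poly_multiple g (u k) /\ even_poly_multiple g (u k.+1) by [].
elim: k => [|k [[q0 [u0E q0N]] [q1 [u1E q1N]]]]; first by [].
split; first by exists q1.
exists ((2%:P - 'X ^+ 2) * q1 - q0); split=> A.
  by rewrite u_rec u0E u1E !(hornerD, hornerN, hornerM, hornerC, hornerX); ring.
by rewrite !(hornerD, hornerN, hornerM, hornerC, hornerX) q0N q1N mulrNN.
Qed.

End EvenPolyMultiple.

Section OppositeParitySums.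
Variable M : nmodType.
Implicit Type F : nat -> M.

Lemma sum_opp_parityS2 F n :
  \sum_(j < n.+2 | odd j != odd n.+2) F j
    = \sum_(j < n | odd j != odd n) F j + F n.+1.
Proof.
rewrite big_mkcond !big_ord_recr /= -big_mkcond /= !negbK eqxx addr0.
by case: (odd n).
Qed.

Lemma sum_opp_parity_cst (x : M) n :
  \sum_(j < n | odd j != odd n) x = x *+ uphalf n.
Proof.
suff [] : \sum_(j < n | odd j != odd n) x = x *+ uphalf n /\
          \sum_(j < n.+1 | odd j != odd n.+1) x = x *+ uphalf n.+1 by [].
elim: n => [|n [IHn IHn1]]; first by rewrite big_ord0 big_ord1_cond.
by split; rewrite // sum_opp_parityS2 IHn mulrSr.
Qed.

End OppositeParitySums.

Lemma natr_uphalf (R : numFieldType) m : (m + odd m)%:R / 2 = (uphalf m)%:R :> R.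
Proof.
have -> : (m + odd m = (uphalf m).*2)%N.
  by rewrite uphalf_half doubleD -addnn -{1}(odd_double_half m) addnAC.
by rewrite -muln2 natrM mulfK ?pnatr_eq0.
Qed.

Section SlopeRecurrence.
Context {R : comNzRingType} {A : R} {e : nat -> R}.
Hypothesis e_rec : forall n,
  e n = (-1) ^+ n * A * ((uphalf n)%:R + \sum_(j < n | odd j != odd n) e j).

Let sum_slopes n := \sum_(j < n) (1 + e j).

Let sum_slopesS n : sum_slopes n.+1 = sum_slopes n + (1 + e n).
Proof. exact: big_ord_recr. Qed.

Let sum_slopes0 : sum_slopes 0 = 0. Proof. exact: big_ord0. Qed.

Let slope0 : e 0 = 0. Proof. by rewrite e_rec big_ord0 /= addr0 mulr0. Qed.

Lemma slope_recS2 n : e n.+2 = e n + (-1) ^+ n * A * (1 + e n.+1).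
Proof. by rewrite e_rec sum_opp_parityS2 /= -natr1 [in RHS]e_rec !exprS; ring. Qed.

Lemma slope_diff n : (-1) ^+ n.+1 * (e n.+1 - e n) = A * sum_slopes n.+1.
Proof.
elim: n => [|n IHn].
  by rewrite sum_slopesS sum_slopes0 e_rec big_ord1_cond /= slope0; ring.
rewrite sum_slopesS [RHS]mulrDr -IHn slope_recS2 !exprS.
(* ((-1) ^+ n) ^+ 2 = 1 *)
by rewrite -[A * (1 + e n.+1)](signrMK n); ring.
Qed.

Lemma sum_slopes_rec n :
  sum_slopes n.+4 = (2 - A ^+ 2) * sum_slopes n.+2 - sum_slopes n.
Proof.
have sum_slopesS2 k : sum_slopes k.+2 = sum_slopes k + (1 + e k) + (1 + e k.+1).
  by rewrite !sum_slopesS.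
rewrite (sum_slopesS2 n.+2) mulrBl expr2 -mulrA -slope_diff sum_slopesS2.
by rewrite !slope_recS2 !exprS; ring.
Qed.

Lemma sum_slopes_small :
  [/\ sum_slopes 1 = 1, sum_slopes 2 = 2 - A & sum_slopes 3 = 3 - A ^+ 2].
Proof.
have slope1 : e 1 = - A.
  have := slope_diff 0; rewrite sum_slopesS sum_slopes0 slope0 subr0.
  by move/(canRL (signrMK 1)) ->; ring.
by split; rewrite !sum_slopesS ?slope_recS2 sum_slopes0 slope0 ?slope1; ring.
Qed.

End SlopeRecurrence.

Section Derivatives.
Context {R : realType}.

Lemma is_derive_sum_cond (P : pred nat) (h : nat -> R -> R) (dh : nat -> R) n (x0 : R) :
    (forall i, (i < n)%N -> P i -> is_derive x0 1 (h i) (dh i)) ->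
  is_derive x0 1 (fun x => \sum_(i < n | P i) h i x) (\sum_(i < n | P i) dh i).
Proof.
move=> hd.
have := @is_derive_sum _ _ _ n (fun i => if P i then h i else cst 0) x0 1
  (fun i => if P i then dh i else 0).
rewrite fct_sumE -big_mkcond.
have -> : (fun x => \sum_(i < n) (if P i then h i else cst 0) x) =
          (fun x => \sum_(i < n | P i) h i x).
  by apply/funext => x; rewrite [RHS]big_mkcond; apply: eq_bigr => i _; case: ifP.
by apply=> i; case: ifP => Pi; [exact: hd | exact: is_derive_cst].
Qed.

Lemma is_derive_expR_mulx (c m : R) (S : R -> R) (x0 dS : R) : is_derive x0 1 S dS ->
  is_derive x0 1 (fun x => expR (c * (x * S x - m)))
    (expR (c * (x0 * S x0 - m)) * (c * (x0 * dS + S x0))).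
Proof.
move=> dS_x0.
have inner : is_derive x0 1 (c \*: (id * S - cst m)) (c * (x0 * dS + S x0)).
  by apply: is_derive_eq; rewrite /GRing.scale /= mulr1 subr0.
exact: is_derive1_comp (is_derive_expR _) inner.
Qed.

End Derivatives.

Section ExponentialTower.
Context {R : realType}.
Variable A : R.

Lemma size_Elist x n : size (Elist A x n) = n.+1.
Proof. by elim: n => //= n IHn; rewrite size_rcons IHn. Qed.

Lemma nth_Elist x n j : (j <= n)%N -> (Elist A x n)`_j = E j A x.
Proof.
elim: n j => [|n IHn] j; first by rewrite leqn0 => /eqP ->.
rewrite leq_eqVlt => /predU1P[-> //|]; rewrite ltnS => j_le_n.
by rewrite /= nth_rcons size_Elist ltnS j_le_n IHn.
Qed.

Lemma E_S x n : E n.+1 A x = E_next A x n.+1 (Elist A x n).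
Proof. by rewrite /E /= nth_rcons size_Elist ltnn eqxx. Qed.

(* One formula for both parities, which also covers E_0 and E_1. *)
Lemma E_expR n x : E n A x =
  expR ((-1) ^+ n * A * (x * \sum_(j < n | odd j != odd n) E j A x - (uphalf n)%:R)).
Proof.
case: n => [|[|n]]; first by rewrite big_ord0 mulr0 subr0 mulr0 expR0.
  by rewrite E_S big_ord1_cond /=; congr expR; rewrite /E /=; ring.
have sE P : \sum_(j < n.+2 | P j) (Elist A x n.+1)`_j = \sum_(j < n.+2 | P j) E j A x.
  by apply: eq_bigr => j _; rewrite nth_Elist // -ltnS.
rewrite E_S /E_next !sE -natr_uphalf -signr_odd /= negbK.
case: (odd n); rewrite ?addn1 ?addn0; congr expR.
  by under [in RHS]eq_bigl do rewrite eqb_id; ring.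
by under [in RHS]eq_bigl do rewrite eqbF_neg negbK; ring.
Qed.

Lemma E_at1 n : E n A 1 = 1 /\ is_derive (1 : R) 1 (E n A)
  ((-1) ^+ n * A * ((uphalf n)%:R + \sum_(j < n | odd j != odd n) derive1 (E j A) 1)).
Proof.
elim/ltn_ind: n => n IHn.
have sum_E1 : \sum_(j < n | odd j != odd n) E j A 1 = (uphalf n)%:R.
  by rewrite -sum_opp_parity_cst; apply: eq_bigr => j _; have [] := IHn j (ltn_ord j).
have dsum_E : is_derive (1 : R) 1 (fun x => \sum_(j < n | odd j != odd n) E j A x)
                          (\sum_(j < n | odd j != odd n) derive1 (E j A) 1).
  apply: (is_derive_sum_cond (fun j => odd j != odd n) (fun j => E j A)
    (fun j => derive1 (E j A) 1)) => j j_lt_n _.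
  have [_ [dEj _]] := IHn j j_lt_n.
  by rewrite derive1E; exact: derivableP.
split; first by rewrite E_expR sum_E1 mul1r subrr mulr0 expR0.
have -> : E n A = fun x => expR ((-1) ^+ n * A *
    (x * \sum_(j < n | odd j != odd n) E j A x - (uphalf n)%:R)).
  by apply/funext => x; exact: E_expR.
move/(is_derive_expR_mulx ((-1) ^+ n * A) (uphalf n)%:R): dsum_E.
by rewrite sum_E1 !mul1r subrr mulr0 expR0 mul1r addrC.
Qed.

Lemma derive1_E_at1 n : derive1 (E n A) 1 =
  (-1) ^+ n * A * ((uphalf n)%:R + \sum_(j < n | odd j != odd n) derive1 (E j A) 1).
Proof. by have [_ dE] := E_at1 n; rewrite derive1E derive_val. Qed.

Lemma is_derive_phi n :
  is_derive (1 : R) 1 (phi n A) (\sum_(j < n) (1 + derive1 (E j A) 1)).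
Proof.
elim: n => [|[|m] IHm]; first by rewrite big_ord0; exact: is_derive_cst.
  have -> : phi 1 A = id - cst 1 by [].
  rewrite big_ord1 derive1_E_at1 big_ord0 /= mulr0n addr0 mulr0 addr0.
  by apply: is_derive_eq; rewrite subr0.
have [E1 dE] := E_at1 m.+1.
have -> : phi m.+2 A = phi m.+1 A - cst 1 + id * E m.+1 A by [].
apply: is_derive_eq.
by rewrite [RHS]big_ord_recr (derive1_E_at1 m.+1) /= E1 subr0 !scale1r; ring.
Qed.

Lemma p_sum n : p n A = \sum_(j < n) (1 + derive1 (E j A) 1).
Proof. by have dphi := is_derive_phi n; rewrite /p derive1E derive_val. Qed.

Lemma p_rec n : p n.+4 A = (2 - A ^+ 2) * p n.+2 A - p n A.
Proof. by rewrite !p_sum (sum_slopes_rec derive1_E_at1). Qed.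

Lemma p_small : [/\ p 0 A = 0, p 1 A = 1, p 2 A = 2 - A & p 3 A = 3 - A ^+ 2].
Proof.
rewrite !p_sum big_ord0.
by have [] := sum_slopes_small derive1_E_at1.
Qed.

End ExponentialTower.

Theorem corollary4p9 (R : realType) (n : nat) (hn : (1 <= n)%N) :
  (exists q : {poly R},
      (forall A : R, p (2 * n) A = (2 - A) * q.[A]) /\
      (forall A : R, q.[- A] = q.[A])) /\
  (forall A : R, p (2 * n + 1) (- A) = p (2 * n + 1) A).
Proof.
rewrite mul2n addn1; split.
  apply: (even_poly_multiple_rec (fun A => 2 - A) (fun k => p k.*2) n) => [k A||].
  - exact: p_rec.
  - by exists 0; split=> A; rewrite !horner0 // mulr0; have [->] := p_small A.
  - by exists 1; split=> A; rewrite !hornerC // mulr1; have [_ _ ->] := p_small A.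
have [q [pE qN]] : even_poly_multiple (fun _ : R => 1) (p n.*2.+1).
  apply: (even_poly_multiple_rec (fun _ => 1) (fun k => p k.*2.+1) n) => [k A||].
  - exact: p_rec.
  - by exists 1; split=> A; rewrite !hornerC // mul1r; have [_ ->] := p_small A.
  - exists (3%:P - 'X^2); split=> A; rewrite !(hornerD, hornerN, hornerC, hornerXn).
      by rewrite mul1r; have [_ _ _ ->] := p_small A.
    by rewrite sqrrN.
by move=> A; rewrite !pE qN.
Qed.
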